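(* Assume $R_1(i)\neq0$ for $2\le i\le I-1$, $R_2(j)\neq0$ for $2\le j\le J-1$, and that $\alpha,\beta\in\mathbb R$ satisfy $(\alpha+1)R_1(I-1)+(\eta_{1,I-1}^n-\epsilon_1)\neq0$ and $(\beta-1)R_2(2)+(\eta_{2,2}^n+\epsilon_2)\neq0$. Let $(e_1^m,e_2^m)_{m\ge0}$ be the error iterates of the linearized implicit Schwarz iteration for the Burgers equations with the Robin-type (optimized) interface condition defined below. Then, with $$\bar\rho=-\frac{(\alpha+1)(\eta_{2,2}^n+\epsilon_2)-R_2(2)}{(\alpha+1)R_1(I-1)+\eta_{1,I-1}^n-\epsilon_1}\cdot\frac{(\beta-1)(\eta_{1,I-1}^n-\epsilon_1)-R_1(I-1)}{(\beta-1)R_2(2)+\eta_{2,2}^n+\epsilon_2},$$ one has, for every $m\ge1$, $e_{1,i}^{m+2}=\bar\rho\,e_{1,i}^m$ for all $1\le i\le I$ and $e_{2,j}^{m+2}=\bar\rho\,e_{2,j}^m$ for all $1\le j\le J$.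
   Context: Setting (implicit scheme, node-dependent linearized advection). Integers $I,J\ge3$; grid 1 has nodes $1,\dots,I$, grid 2 has nodes $1,\dots,J$, with node $I-1$ of grid 1 coinciding with node 1 of grid 2 and node $I$ of grid 1 coinciding with node 2 of grid 2. Real constants $\epsilon_k,\gamma_k$ and real numbers $\eta_{1,i}^n$ ($2\le i\le I-1$), $\eta_{2,j}^n$ ($2\le j\le J-1$) are given. Define recursively $R_1(2)=1+2\epsilon_1+\gamma_1$, $R_1(i)=1+2\epsilon_1+\gamma_1+\dfrac{(\eta_{1,i-1}^n-\epsilon_1)(\eta_{1,i}^n+\epsilon_1)}{R_1(i-1)}$ for $i=3,\dots,I-1$; $R_2(J-1)=1+2\epsilon_2+\gamma_2$, $R_2(j)=1+2\epsilon_2+\gamma_2+\dfrac{(\eta_{2,j}^n-\epsilon_2)(\eta_{2,j+1}^n+\epsilon_2)}{R_2(j+1)}$ for $j=J-2,\dots,2$. Error iteration with optimized interface condition: $e_1^0\in\mathbb R^I$, $e_2^0\in\mathbb R^J$ arbitrary; for $m\ge1$: $e_{1,1}^m=0$; $-(\eta_{1,i}^n+\epsilon_1)e_{1,i-1}^m+(1+2\epsilon_1+\gamma_1)e_{1,i}^m+(\eta_{1,i}^n-\epsilon_1)e_{1,i+1}^m=0$ for $2\le i\le I-1$; $(e_{1,I}^m-e_{1,I-1}^m)+\alpha e_{1,I}^m=(e_{2,2}^{m-1}-e_{2,1}^{m-1})+\alpha e_{2,2}^{m-1}$; $e_{2,J}^m=0$; $-(\eta_{2,j}^n+\epsilon_2)e_{2,j-1}^m+(1+2\epsilon_2+\gamma_2)e_{2,j}^m+(\eta_{2,j}^n-\epsilon_2)e_{2,j+1}^m=0$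 for $2\le j\le J-1$; $(e_{2,2}^m-e_{2,1}^m)+\beta e_{2,1}^m=(e_{1,I}^{m-1}-e_{1,I-1}^{m-1})+\beta e_{1,I-1}^{m-1}$. *)

From Stdlib Require Import Reals.
Open Scope R_scope.

(* Node-dependent coefficients: eta1 i = eta_{1,i}^n, eta2 j = eta_{2,j}^n. *)

(* R_1(2+k) by recursion on k:
   R_1(2) = 1+2eps1+gam1,
   R_1(i) = 1+2eps1+gam1 + (eta_{1,i-1}-eps1)(eta_{1,i}+eps1)/R_1(i-1). *)
Fixpoint Rrec1_aux (eps1 gam1 : R) (eta1 : nat -> R) (k : nat) : R :=
  match k with
  | O => 1 + 2 * eps1 + gam1
  | S k' => 1 + 2 * eps1 + gam1
            + (eta1 (k + 1)%nat - eps1) * (eta1 (k + 2)%nat + eps1)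
              / Rrec1_aux eps1 gam1 eta1 k'
  end.

Definition Rrec1 (eps1 gam1 : R) (eta1 : nat -> R) (i : nat) : R :=
  Rrec1_aux eps1 gam1 eta1 (i - 2).

(* R_2(J-1-k) by recursion on k:
   R_2(J-1) = 1+2eps2+gam2,
   R_2(j) = 1+2eps2+gam2 + (eta_{2,j}-eps2)(eta_{2,j+1}+eps2)/R_2(j+1). *)
Fixpoint Rrec2_aux (J : nat) (eps2 gam2 : R) (eta2 : nat -> R) (k : nat) : R :=
  match k with
  | O => 1 + 2 * eps2 + gam2
  | S k' => 1 + 2 * eps2 + gam2
            + (eta2 (J - 1 - k)%nat - eps2) * (eta2 (J - k)%nat + eps2)
              / Rrec2_aux J eps2 gam2 eta2 k'
  end.

Definition Rrec2 (J : nat) (eps2 gam2 : R) (eta2 : nat -> R) (j : nat) : R :=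
  Rrec2_aux J eps2 gam2 eta2 (J - 1 - j).

(* The error iteration with the optimized (Robin) interface condition;
   e1 m i = e_{1,i}^m (1 <= i <= I), e2 m j = e_{2,j}^m (1 <= j <= J).
   e^0 is arbitrary; the equations are imposed for every m >= 1. *)
Definition schwarz_error_iter (I J : nat) (eps1 gam1 eps2 gam2 alpha beta : R)
  (eta1 eta2 : nat -> R) (e1 e2 : nat -> nat -> R) : Prop :=
  forall m : nat, (1 <= m)%nat ->
    e1 m 1%nat = 0 /\
    (forall i : nat, (2 <= i <= I - 1)%nat ->
       - (eta1 i + eps1) * e1 m (i - 1)%nat + (1 + 2 * eps1 + gam1) * e1 m i
       + (eta1 i - eps1) * e1 m (i + 1)%nat = 0) /\
    (e1 m I - e1 m (I - 1)%nat) + alpha * e1 m I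
      = (e2 (m - 1)%nat 2%nat - e2 (m - 1)%nat 1%nat) + alpha * e2 (m - 1)%nat 2%nat /\
    e2 m J = 0 /\
    (forall j : nat, (2 <= j <= J - 1)%nat ->
       - (eta2 j + eps2) * e2 m (j - 1)%nat + (1 + 2 * eps2 + gam2) * e2 m j
       + (eta2 j - eps2) * e2 m (j + 1)%nat = 0) /\
    (e2 m 2%nat - e2 m 1%nat) + beta * e2 m 1%nat
      = (e1 (m - 1)%nat I - e1 (m - 1)%nat (I - 1)%nat) + beta * e1 (m - 1)%nat (I - 1)%nat.

From Stdlib Require Import Reals Lra Lia.
Open Scope R_scope.

(* On each subdomain the error solves the homogeneous three-point stencil.
   Gaussian elimination with the pivots R_1 (forward, from the Dirichlet
   node 1 of grid 1) and R_2 (backward, from the Dirichlet node J of grid 2)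
   reduces the stencil to the two-term relations
     R_1(i) x_i + (eta_{1,i} - eps_1) x_{i+1} = 0,
     -(eta_{2,j} + eps_2) y_{j-1} + R_2(j) y_j = 0,
   which show (i) that a solution vanishing at both ends vanishes, and
   (ii) that near the interface each subdomain error is determined by one
   value.  Inserting (ii) into the two Robin conditions gives
   e_{1,I}^n = kappa_1 e_{2,1}^{n-1} and e_{2,1}^n = kappa_2 e_{1,I}^{n-1},
   and rho = kappa_1 kappa_2 is the factor of the statement.  So the interface
   values are multiplied by rho every two steps, and by (i), applied to
   e^{m+2} - rho e^m, so is the whole error. *)

Definition stencil (eps gam : R) (eta : nat -> R) (x : nat -> R) (i : nat) : R :=
  - (eta i + eps) * x (i - 1)%nat + (1 + 2 * eps + gam) * x i
  + (eta i - eps) * x (i + 1)%nat.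

Definition solves_stencil (N : nat) (eps gam : R) (eta : nat -> R) (x : nat -> R) : Prop :=
  forall i : nat, (2 <= i <= N - 1)%nat -> stencil eps gam eta x i = 0.

Lemma solves_stencil_combination (N : nat) (eps gam c : R) (eta x y : nat -> R) :
  solves_stencil N eps gam eta x -> solves_stencil N eps gam eta y ->
  solves_stencil N eps gam eta (fun k => x k - c * y k).
Proof.
  intros Hx Hy i Hi.
  replace (stencil eps gam eta (fun k => x k - c * y k) i)
    with (stencil eps gam eta x i - c * stencil eps gam eta y i)
    by (unfold stencil; ring).
  rewrite (Hx i Hi), (Hy i Hi); ring.
Qed.

Lemma Rrec1_base (eps gam : R) (eta : nat -> R) :
  Rrec1 eps gam eta 2 = 1 + 2 * eps + gam.
Proof. reflexivity. Qed.

Lemma Rrec1_step (eps gam : R) (eta : nat -> R) (i : nat) : (2 <= i)%nat ->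
  Rrec1 eps gam eta (i + 1) = 1 + 2 * eps + gam
    + (eta i - eps) * (eta (i + 1)%nat + eps) / Rrec1 eps gam eta i.
Proof.
  intros Hi; unfold Rrec1.
  replace (i + 1 - 2)%nat with (S (i - 2)) by lia; cbn [Rrec1_aux].
  replace (S (i - 2) + 1)%nat with i by lia.
  replace (S (i - 2) + 2)%nat with (i + 1)%nat by lia.
  reflexivity.
Qed.

Lemma Rrec2_base (J : nat) (eps gam : R) (eta : nat -> R) :
  Rrec2 J eps gam eta (J - 1) = 1 + 2 * eps + gam.
Proof. unfold Rrec2; rewrite Nat.sub_diag; reflexivity. Qed.

Lemma Rrec2_step (J : nat) (eps gam : R) (eta : nat -> R) (j : nat) : (j + 2 <= J)%nat ->
  Rrec2 J eps gam eta j = 1 + 2 * eps + gam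
    + (eta j - eps) * (eta (j + 1)%nat + eps) / Rrec2 J eps gam eta (j + 1).
Proof.
  intros Hj; unfold Rrec2.
  replace (J - 1 - j)%nat with (S (J - 1 - (j + 1))) by lia; cbn [Rrec2_aux].
  replace (J - 1 - S (J - 1 - (j + 1)))%nat with j by lia.
  replace (J - S (J - 1 - (j + 1)))%nat with (j + 1)%nat by lia.
  reflexivity.
Qed.

(* One elimination step: substituting a two-term relation r x + a y = 0 into
   the stencil row through y yields the next pivot d + a b / r. *)
Lemma forward_substitution (r a b d c x y z : R) :
  r <> 0 -> r * x + a * y = 0 -> - b * x + d * y + c * z = 0 ->
  (d + a * b / r) * y + c * z = 0.
Proof.
  intros Hr E1 E2.
  replace ((d + a * b / r) * y + c * z)
    with ((- b * x + d * y + c * z) + b / r * (r * x + a * y)) by (field; exact Hr).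
  rewrite E1, E2; ring.
Qed.

Lemma backward_substitution (r a b d c x y z : R) :
  r <> 0 -> - a * y + r * x = 0 -> c * z + d * y + b * x = 0 ->
  c * z + (d + b * a / r) * y = 0.
Proof.
  intros Hr E1 E2.
  replace (c * z + (d + b * a / r) * y)
    with ((c * z + d * y + b * x) - b / r * (- a * y + r * x)) by (field; exact Hr).
  rewrite E1, E2; ring.
Qed.

Section Elimination.

Variables (N : nat) (eps gam : R) (eta : nat -> R) (x : nat -> R).
Hypothesis Hsolves : solves_stencil N eps gam eta x.

Lemma forward_elimination :
  (forall i : nat, (2 <= i <= N - 1)%nat -> Rrec1 eps gam eta i <> 0) ->
  x 1%nat = 0 ->
  forall i : nat, (2 <= i <= N - 1)%nat ->
    Rrec1 eps gam eta i * x i + (eta i - eps) * x (i + 1)%nat = 0.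
Proof.
  intros HR Hx1 i; induction i as [|i IH]; intros Hi; [lia|].
  pose proof (Hsolves (S i) Hi) as E; unfold stencil in E.
  replace (S i - 1)%nat with i in E by lia.
  destruct (Nat.eq_dec i 1) as [->|Hi1].
  - rewrite Rrec1_base; rewrite Hx1 in E; lra.
  - replace (S i) with (i + 1)%nat in * by lia.
    rewrite Rrec1_step by lia.
    apply (forward_substitution _ _ _ _ _ (x i)); [apply HR; lia | apply IH; lia | exact E].
Qed.

Lemma backward_elimination :
  (forall j : nat, (2 <= j <= N - 1)%nat -> Rrec2 N eps gam eta j <> 0) ->
  x N = 0 ->
  forall j : nat, (2 <= j <= N - 1)%nat ->
    - (eta j + eps) * x (j - 1)%nat + Rrec2 N eps gam eta j * x j = 0.
Proof.
  intros HR HxN j Hj; remember (N - 1 - j)%nat as k eqn:Hk.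
  revert j Hj Hk; induction k as [|k IH]; intros j Hj Hk.
  - pose proof (Hsolves j Hj) as E; unfold stencil in E.
    replace j with (N - 1)%nat in * by lia.
    replace (N - 1 + 1)%nat with N in E by lia.
    rewrite Rrec2_base; rewrite HxN in E; lra.
  - pose proof (Hsolves j Hj) as E; unfold stencil in E.
    rewrite Rrec2_step by lia.
    apply (backward_substitution _ _ _ _ _ (x (j + 1)%nat)); [apply HR; lia | | exact E].
    specialize (IH (j + 1)%nat ltac:(lia) ltac:(lia)).
    replace (j + 1 - 1)%nat with j in IH by lia; exact IH.
Qed.

Lemma forward_uniqueness :
  (forall i : nat, (2 <= i <= N - 1)%nat -> Rrec1 eps gam eta i <> 0) ->
  x 1%nat = 0 -> x N = 0 -> forall i : nat, (1 <= i <= N)%nat -> x i = 0.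
Proof.
  intros HR Hx1 HxN.
  assert (Hdown : forall k, (k <= N - 2)%nat -> x (N - k)%nat = 0).
  { induction k as [|k IH]; intros Hk; [rewrite Nat.sub_0_r; exact HxN|].
    pose proof (forward_elimination HR Hx1 (N - S k) ltac:(lia)) as E.
    replace (N - S k + 1)%nat with (N - k)%nat in E by lia.
    rewrite IH in E by lia.
    apply (Rmult_eq_reg_l (Rrec1 eps gam eta (N - S k))); [lra | apply HR; lia]. }
  intros i Hi; destruct (Nat.eq_dec i 1) as [->|Hi1]; [exact Hx1|].
  replace i with (N - (N - i))%nat by lia; apply Hdown; lia.
Qed.

Lemma backward_uniqueness :
  (forall j : nat, (2 <= j <= N - 1)%nat -> Rrec2 N eps gam eta j <> 0) ->
  x N = 0 -> x 1%nat = 0 -> forall j : nat, (1 <= j <= N)%nat -> x j = 0.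
Proof.
  intros HR HxN Hx1.
  assert (Hup : forall k, (k + 1 <= N - 1)%nat -> x (k + 1)%nat = 0).
  { induction k as [|k IH]; intros Hk; [exact Hx1|].
    pose proof (backward_elimination HR HxN (S k + 1) ltac:(lia)) as E.
    replace (S k + 1 - 1)%nat with (k + 1)%nat in E by lia.
    rewrite IH in E by lia.
    apply (Rmult_eq_reg_l (Rrec2 N eps gam eta (S k + 1))); [lra | apply HR; lia]. }
  intros j Hj; destruct (Nat.eq_dec j N) as [->|HjN]; [exact HxN|].
  replace j with (j - 1 + 1)%nat by lia; apply Hup; lia.
Qed.

End Elimination.

Lemma grid1_proportional (N : nat) (eps gam c : R) (eta x y : nat -> R) :
  (forall i : nat, (2 <= i <= N - 1)%nat -> Rrec1 eps gam eta i <> 0) ->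
  solves_stencil N eps gam eta x -> solves_stencil N eps gam eta y ->
  x 1%nat = 0 -> y 1%nat = 0 -> x N = c * y N ->
  forall i : nat, (1 <= i <= N)%nat -> x i = c * y i.
Proof.
  intros HR Hx Hy Hx1 Hy1 HxN i Hi.
  enough (Hz : x i - c * y i = 0) by lra.
  apply (forward_uniqueness N eps gam eta (fun k => x k - c * y k)); auto.
  - exact (solves_stencil_combination N eps gam c eta x y Hx Hy).
  - rewrite Hx1, Hy1; ring.
  - rewrite HxN; ring.
Qed.

Lemma grid2_proportional (N : nat) (eps gam c : R) (eta x y : nat -> R) :
  (forall j : nat, (2 <= j <= N - 1)%nat -> Rrec2 N eps gam eta j <> 0) ->
  solves_stencil N eps gam eta x -> solves_stencil N eps gam eta y ->
  x N = 0 -> y N = 0 -> x 1%nat = c * y 1%nat ->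
  forall j : nat, (1 <= j <= N)%nat -> x j = c * y j.
Proof.
  intros HR Hx Hy HxN HyN Hx1 j Hj.
  enough (Hz : x j - c * y j = 0) by lra.
  apply (backward_uniqueness N eps gam eta (fun k => x k - c * y k)); auto.
  - exact (solves_stencil_combination N eps gam c eta x y Hx Hy).
  - rewrite HxN, HyN; ring.
  - rewrite Hx1; ring.
Qed.

(* Transmission factors of the two Robin conditions, written with
   r1 = R_1(I-1), r2 = R_2(2), h = eta_{1,I-1} - eps_1, g = eta_{2,2} + eps_2. *)
Definition kappa1 (alpha r1 r2 h g : R) : R :=
  r1 * ((alpha + 1) * g - r2) / (((alpha + 1) * r1 + h) * r2).

Definition kappa2 (beta r1 r2 h g : R) : R :=
  r2 * (r1 - (beta - 1) * h) / (r1 * ((beta - 1) * r2 + g)).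

(* Robin condition on grid 1, with x = e_{1,I-1}, a = e_{1,I} related by the
   last eliminated row of grid 1 and b = e_{2,1}, y = e_{2,2} by the first
   eliminated row of grid 2.  The cross-multiplied form is a linear
   combination of the three relations. *)
Lemma robin_transmission1 (r1 r2 h g alpha a x y b : R) :
  r1 <> 0 -> r2 <> 0 -> (alpha + 1) * r1 + h <> 0 ->
  r1 * x + h * a = 0 -> - g * b + r2 * y = 0 ->
  (a - x) + alpha * a = (y - b) + alpha * y ->
  a = kappa1 alpha r1 r2 h g * b.
Proof.
  intros Hr1 Hr2 HP E1 E2 E3.
  assert (Hcross : a * ((alpha + 1) * r1 + h) * r2 = b * r1 * ((alpha + 1) * g - r2)).
  { assert (D : a * ((alpha + 1) * r1 + h) * r2 - b * r1 * ((alpha + 1) * g - r2)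
       = r1 * r2 * (((a - x) + alpha * a) - ((y - b) + alpha * y))
         + r2 * (r1 * x + h * a) + r1 * (alpha + 1) * (- g * b + r2 * y)) by ring.
    rewrite E1, E2, E3 in D; lra. }
  unfold kappa1; field_simplify_eq; [lra | auto].
Qed.

Lemma robin_transmission2 (r1 r2 h g beta a x y b : R) :
  r1 <> 0 -> r2 <> 0 -> (beta - 1) * r2 + g <> 0 ->
  r1 * x + h * a = 0 -> - g * b + r2 * y = 0 ->
  (y - b) + beta * b = (a - x) + beta * x ->
  b = kappa2 beta r1 r2 h g * a.
Proof.
  intros Hr1 Hr2 HQ E1 E2 E3.
  assert (Hcross : b * r1 * ((beta - 1) * r2 + g) = a * r2 * (r1 - (beta - 1) * h)).
  { assert (D : b * r1 * ((beta - 1) * r2 + g) - a * r2 * (r1 - (beta - 1) * h)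
       = r1 * r2 * (((y - b) + beta * b) - ((a - x) + beta * x))
         - r1 * (- g * b + r2 * y) + r2 * (beta - 1) * (r1 * x + h * a)) by ring.
    rewrite E1, E2, E3 in D; lra. }
  unfold kappa2; field_simplify_eq; [lra | auto].
Qed.

Lemma rate_factorization (alpha beta r1 r2 p1 p2 eps1 eps2 : R) :
  r1 <> 0 -> r2 <> 0 ->
  (alpha + 1) * r1 + (p1 - eps1) <> 0 -> (beta - 1) * r2 + (p2 + eps2) <> 0 ->
  - (((alpha + 1) * (p2 + eps2) - r2) / ((alpha + 1) * r1 + p1 - eps1))
  * (((beta - 1) * (p1 - eps1) - r1) / ((beta - 1) * r2 + p2 + eps2))
  = kappa1 alpha r1 r2 (p1 - eps1) (p2 + eps2) * kappa2 beta r1 r2 (p1 - eps1) (p2 + eps2).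
Proof.
  intros Hr1 Hr2 HP HQ; unfold kappa1, kappa2.
  field; auto.
Qed.

Section SchwarzIteration.

Variables (I J : nat) (eps1 gam1 eps2 gam2 alpha beta : R).
Variables (eta1 eta2 : nat -> R) (e1 e2 : nat -> nat -> R).
Hypothesis HI : (3 <= I)%nat.
Hypothesis HJ : (3 <= J)%nat.
Hypothesis HR1 : forall i : nat, (2 <= i <= I - 1)%nat -> Rrec1 eps1 gam1 eta1 i <> 0.
Hypothesis HR2 : forall j : nat, (2 <= j <= J - 1)%nat -> Rrec2 J eps2 gam2 eta2 j <> 0.
Hypothesis Hiter : schwarz_error_iter I J eps1 gam1 eps2 gam2 alpha beta eta1 eta2 e1 e2.

Local Notation r1 := (Rrec1 eps1 gam1 eta1 (I - 1)).
Local Notation r2 := (Rrec2 J eps2 gam2 eta2 2).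
Local Notation h := (eta1 (I - 1)%nat - eps1).
Local Notation g := (eta2 2%nat + eps2).

Lemma grid1_interface_row (n : nat) : (1 <= n)%nat ->
  r1 * e1 n (I - 1)%nat + h * e1 n I = 0.
Proof.
  intros Hn; destruct (Hiter n Hn) as (Hdir & Hsol & _).
  pose proof (forward_elimination I eps1 gam1 eta1 (e1 n) Hsol HR1 Hdir (I - 1) ltac:(lia)) as E.
  replace (I - 1 + 1)%nat with I in E by lia; exact E.
Qed.

Lemma grid2_interface_row (n : nat) : (1 <= n)%nat ->
  - g * e2 n 1%nat + r2 * e2 n 2%nat = 0.
Proof.
  intros Hn; destruct (Hiter n Hn) as (_ & _ & _ & Hdir & Hsol & _).
  exact (backward_elimination J eps2 gam2 eta2 (e2 n) Hsol HR2 Hdir 2 ltac:(lia)).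
Qed.

Lemma transmission1 (n : nat) : (2 <= n)%nat ->
  (alpha + 1) * r1 + h <> 0 ->
  e1 n I = kappa1 alpha r1 r2 h g * e2 (n - 1)%nat 1%nat.
Proof.
  intros Hn HP; destruct (Hiter n ltac:(lia)) as (_ & _ & Hrobin & _).
  apply (robin_transmission1 _ _ _ _ _ _ (e1 n (I - 1)%nat) (e2 (n - 1)%nat 2%nat));
    [apply HR1; lia | apply HR2; lia | exact HP
    | apply grid1_interface_row; lia | apply grid2_interface_row; lia | exact Hrobin].
Qed.

Lemma transmission2 (n : nat) : (2 <= n)%nat ->
  (beta - 1) * r2 + g <> 0 ->
  e2 n 1%nat = kappa2 beta r1 r2 h g * e1 (n - 1)%nat I.
Proof.
  intros Hn HQ; destruct (Hiter n ltac:(lia)) as (_ & _ & _ & _ & _ & Hrobin).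
  apply (robin_transmission2 _ _ _ _ _ _ (e1 (n - 1)%nat (I - 1)%nat) (e2 n 2%nat));
    [apply HR1; lia | apply HR2; lia | exact HQ
    | apply grid1_interface_row; lia | apply grid2_interface_row; lia | exact Hrobin].
Qed.

End SchwarzIteration.

Theorem proposition5p4 (I J : nat) (eps1 gam1 eps2 gam2 alpha beta : R)
  (eta1 eta2 : nat -> R) (e1 e2 : nat -> nat -> R) :
  (3 <= I)%nat -> (3 <= J)%nat ->
  (forall i : nat, (2 <= i <= I - 1)%nat -> Rrec1 eps1 gam1 eta1 i <> 0) ->
  (forall j : nat, (2 <= j <= J - 1)%nat -> Rrec2 J eps2 gam2 eta2 j <> 0) ->
  (alpha + 1) * Rrec1 eps1 gam1 eta1 (I - 1)%nat + (eta1 (I - 1)%nat - eps1) <> 0 ->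
  (beta - 1) * Rrec2 J eps2 gam2 eta2 2%nat + (eta2 2%nat + eps2) <> 0 ->
  schwarz_error_iter I J eps1 gam1 eps2 gam2 alpha beta eta1 eta2 e1 e2 ->
  let rho :=
    - (((alpha + 1) * (eta2 2%nat + eps2) - Rrec2 J eps2 gam2 eta2 2%nat)
        / ((alpha + 1) * Rrec1 eps1 gam1 eta1 (I - 1)%nat + eta1 (I - 1)%nat - eps1))
    * (((beta - 1) * (eta1 (I - 1)%nat - eps1) - Rrec1 eps1 gam1 eta1 (I - 1)%nat)
        / ((beta - 1) * Rrec2 J eps2 gam2 eta2 2%nat + eta2 2%nat + eps2)) in
  forall m : nat, (1 <= m)%nat ->
    (forall i : nat, (1 <= i <= I)%nat -> e1 (m + 2)%nat i = rho * e1 m i) /\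
    (forall j : nat, (1 <= j <= J)%nat -> e2 (m + 2)%nat j = rho * e2 m j).
Proof.
  intros HI HJ HR1 HR2 HP HQ Hiter rho m Hm.
  assert (Hrho : rho = kappa1 alpha (Rrec1 eps1 gam1 eta1 (I - 1)) (Rrec2 J eps2 gam2 eta2 2)
                         (eta1 (I - 1)%nat - eps1) (eta2 2%nat + eps2)
                     * kappa2 beta (Rrec1 eps1 gam1 eta1 (I - 1)) (Rrec2 J eps2 gam2 eta2 2)
                         (eta1 (I - 1)%nat - eps1) (eta2 2%nat + eps2)).
  { apply rate_factorization; [apply HR1 | apply HR2 | |]; auto; lia. }
  assert (Hpred2 : (m + 2 - 1 = m + 1)%nat) by lia.
  assert (Hpred1 : (m + 1 - 1 = m)%nat) by lia.
  pose proof (transmission1 I J eps1 gam1 eps2 gam2 alpha beta eta1 eta2 e1 e2 HI HJ HR1 HR2 Hiter) as T1.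
  pose proof (transmission2 I J eps1 gam1 eps2 gam2 alpha beta eta1 eta2 e1 e2 HI HJ HR1 HR2 Hiter) as T2.
  destruct (Hiter (m + 2)%nat ltac:(lia)) as (Dir1 & Sol1 & _ & Dir2 & Sol2 & _).
  destruct (Hiter m Hm) as (Dir1m & Sol1m & _ & Dir2m & Sol2m & _).
  split.
  - apply (grid1_proportional I eps1 gam1 rho eta1); auto.
    rewrite Hrho, (T1 (m + 2)%nat), Hpred2, (T2 (m + 1)%nat), Hpred1 by (auto; lia); ring.
  - apply (grid2_proportional J eps2 gam2 rho eta2); auto.
    rewrite Hrho, (T2 (m + 2)%nat), Hpred2, (T1 (m + 1)%nat), Hpred1 by (auto; lia); ring.
Qed.
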